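(* Let $V=\{1,\dots,n\}$, let $(\bar\Omega,\mathcal F,\mathbb P)$ be a probability space, and let $\sigma:\{0,1\}^n\times\bar\Omega\to\mathbb R$ be such that for every $\omega$ the function $x\mapsto\sigma(x,\omega)$ on $\{0,1\}^n$ (viewed as a set function on $V$) is nondecreasing and submodular, and each $\sigma(x)$ is integrable. Let $\mathcal X\subseteq\{0,1\}^n$ be nonempty and $\alpha\in(0,1]$. Consider the following delayed constraint generation algorithm for $\max_{x\in\mathcal X}\mathrm{CVaR}_\alpha(\sigma(x))$, with tolerance $\epsilon=0$: start with a finite set $\mathcal C$ of optimality cuts, $\mathrm{UB}=\infty$, $\mathrm{LB}=-\infty$; while $\mathrm{UB}-\mathrm{LB}>\epsilon$: solve the relaxed master problem $\max\{\psi:(x,\psi)\text{ satisfies all cuts in }\mathcal C,\ x\in\mathcal X,\ \psi\in\mathbb R\}$ to optimality, obtaining $(\bar\psi,\bar x)$; set $\mathrm{UB}=\bar\psi$ and $\mathrm{LB}=\mathrm{CVaR}_\alpha(\sigma(\bar x))$; add to $\mathcal C$ the cut (A) and/or the cut (B) generated at $\bar x$, where, with $\bar X$ the support of $\bar x$, (A): $\psi\le\mathrm{CVaR}_\alpha(\sigma(\bar x))+\sum_{j\in V\setminus\bar X}(\mathrm{CVaR}_1(\sigma(\bar x+\mathbf e_j))-\mathrm{CVaR}_\alpha(\sigma(\bar x)))x_j$; (B): $\psi\le\mathrm{CVaR}_\alpha(\sigma(\bar x))+\sum_{i=1}^r\bar\delta_{j_i}(\bar x)x_{j_i}$, for some ordering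 $j_1,\dots,j_r$ of $V\setminus\bar X$, $\bar\delta_{j_i}(\bar x)=\mathrm{CVaR}_\alpha(\sigma(\mathbf 1-\sum_{l=i+1}^r\mathbf e_{j_l}))-\mathrm{CVaR}_\alpha(\sigma(\bar x))$; upon termination output $\bar x$. Then this algorithm terminates after finitely many iterations and outputs an optimal solution of $\max_{x\in\mathcal X}\mathrm{CVaR}_\alpha(\sigma(x))$.
   Context: $\mathrm{CVaR}_\alpha(Y)=\max_{\eta\in\mathbb R}\{\eta-\frac1\alpha\mathbb E([\eta-Y]_+)\}$ for integrable $Y$ and $\alpha\in(0,1]$, with $[z]_+=\max(z,0)$. $\mathbf e_j$ is the $j$-th unit vector and $\mathbf 1$ the all-ones vector in $\mathbb R^n$. It is assumed that $\mathrm{CVaR}_\alpha(\sigma(x))$ can be evaluated exactly for any given $x$ (a CVaR oracle), and that each relaxed master problem is solved to optimality. *)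

From HB Require Import structures.
From mathcomp Require Import all_boot all_order all_algebra.
From mathcomp Require Import all_classical all_reals all_analysis.
Set Implicit Arguments. Unset Strict Implicit. Unset Printing Implicit Defensive.
Import Order.TTheory GRing.Theory Num.Theory.
Local Open Scope classical_set_scope.
Local Open Scope ring_scope.

(* A point x of {0,1}^n is represented by its support, a subset of V = 'I_n;
   the coordinate x_j is (j \in x)%:R. *)

(* CVaR_a(Y) = max_eta { eta - a^-1 E[(eta - Y)_+] } (the max is attained for
   integrable Y, so it equals the sup). *)
Definition CVaR d (T : measurableType d) (R : realType) (P : probability T R)
  (a : R) (Y : T -> R) : R :=
  sup [set eta - a^-1 * fine (\int[P]_w (Num.max (eta - Y w) 0)%:E) | eta in [set: R]].

(* A cut  psi <= rhs(x)  is represented by its right-hand side function. *)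
Definition dcg_cut n (R : realType) := {set 'I_n} -> R.

Definition affine_cut n (R : realType) (c : dcg_cut n R) : Prop :=
  exists (c0 : R) (b : 'I_n -> R), forall x, c x = c0 + \sum_(j < n) b j * (j \in x)%:R.

Section Cuts.
Context d (T : measurableType d) (R : realType) (P : probability T R) (n : nat)
  (sigma : {set 'I_n} -> T -> R) (a : R).

Definition cutA (xb : {set 'I_n}) : dcg_cut n R := fun x =>
  CVaR P a (sigma xb) +
  \sum_(j in ~: xb) (CVaR P 1 (sigma (j |: xb)) - CVaR P a (sigma xb)) * (j \in x)%:R.

(* cut (B) generated at xb for the ordering s = [:: j_1; ...; j_r] of V \ xb;
   for j = j_i, [set y in drop (index j s).+1 s] = {j_{i+1},...,j_r}. *)
Definition cutB (xb : {set 'I_n}) (s : seq 'I_n) : dcg_cut n R := fun x =>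
  CVaR P a (sigma xb) +
  \sum_(j <- s) (CVaR P a (sigma (~: [set y in drop (index j s).+1 s]))
                 - CVaR P a (sigma xb)) * (j \in x)%:R.

Definition is_ordering_of_complement (xb : {set 'I_n}) (s : seq 'I_n) : Prop :=
  perm_eq s (enum (~: xb)).

Definition new_cuts (xb : {set 'I_n}) (N : set (dcg_cut n R)) : Prop :=
  N = [set cutA xb] \/
  (exists s, is_ordering_of_complement xb s /\
     (N = [set cutB xb s] \/ N = [set cutA xb; cutB xb s])).

Definition master_opt (X : set {set 'I_n}) (C : set (dcg_cut n R))
  (xb : {set 'I_n}) (psib : R) : Prop :=
  X xb /\ (forall c, C c -> psib <= c xb) /\
  (forall x psi, X x -> (forall c, C c -> psi <= c x) -> psi <= psib).

(* a run of the delayed constraint generation algorithm with epsilon = 0: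
   iteration k is executed iff UB_i - LB_i > 0 for all previous i < k *)
Definition dcg_run (X : set {set 'I_n}) (C : nat -> set (dcg_cut n R))
  (xs : nat -> {set 'I_n}) (ps : nat -> R) : Prop :=
  forall k, (forall i, (i < k)%N -> ps i - CVaR P a (sigma (xs i)) > 0) ->
    master_opt X (C k) (xs k) (ps k) /\
    exists N, new_cuts (xs k) N /\ C k.+1 = C k `|` N.
End Cuts.

From HB Require Import structures.
From mathcomp Require Import all_boot all_order all_algebra.
From mathcomp Require Import all_classical all_reals all_analysis.
From mathcomp Require Import lra.
Import Order.TTheory GRing.Theory Num.Theory.
Import numFieldNormedType.Exports.
Set Implicit Arguments. Unset Strict Implicit. Unset Printing Implicit Defensive.
Local Open Scope classical_set_scope.
Local Open Scope ring_scope.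

(* Every cut of type (A) or (B) is valid on all of {0,1}^n and tight at the
   point where it is generated.  For (A): CVaR_a(s(x)) <= E s(x), and by
   submodularity of x |-> E s(x), E s(x) is at most E s(xb) plus the marginal
   gains E s(xb + e_j) - E s(xb) = CVaR_1(s(xb + e_j)) - E s(xb) of the new
   coordinates j of x; lowering E s(xb) to CVaR_a(s(xb)) only raises this bound
   once x has a new coordinate.  For (B): if j_i is the last new coordinate of
   x in the ordering, then x <= 1 - sum_{l > i} e_{j_l}, and all coefficients
   are nonnegative by monotonicity.
   Tightness means that while UB > LB the master problem never proposes the
   same xb twice, so the run stops after at most 2^n + 1 iterations; this uses
   only the finiteness of {0,1}^n, not that of the initial cuts.  On stopping,
   validity of all cuts gives CVaR_a(s(x)) <= UB <= LB = CVaR_a(s(xb)) for every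
   feasible x. *)

Section CVaR_expectation.
Context d (T : measurableType d) (R : realType) (P : probability T R).
Implicit Types (a eta : R) (Y Z : T -> R).

Local Notation integrable Y := (P.-integrable setT (EFin \o Y)).

Lemma integrable_cst_EFin k : integrable (fun _ => k).
Proof. exact: finite_measure_integrable_cst. Qed.

Lemma integrableD_EFin Y Z : integrable Y -> integrable Z ->
  integrable (fun w => Y w + Z w).
Proof.
by move=> iY iZ; apply: eq_integrable (integrableD measurableT iY iZ).
Qed.

Lemma integrableB_EFin Y Z : integrable Y -> integrable Z ->
  integrable (fun w => Y w - Z w).
Proof.
by move=> iY iZ; apply: eq_integrable (integrableB measurableT iY iZ).
Qed.

Lemma integrable_shortfall eta Y : integrable Y ->
  integrable (fun w => Num.max (eta - Y w) 0).
Proof.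
move=> iY; apply: integrable_funrpos => //.
by apply: integrableB_EFin => //; exact: integrable_cst_EFin.
Qed.

Lemma integrable_excess eta Y : integrable Y ->
  integrable (fun w => Num.max (Y w - eta) 0).
Proof.
move=> iY; apply: integrable_funrpos => //.
by apply: integrableB_EFin => //; exact: integrable_cst_EFin.
Qed.

Lemma probability_Rintegral_cst k : \int[P]_w k = k.
Proof. by rewrite Rintegral_cst //= probability_setT mulr1. Qed.

Definition cvar_obj a Y eta : R :=
  eta - a^-1 * \int[P]_w Num.max (eta - Y w) 0.

Lemma cvar_obj_le_expectation a Y eta : 0 < a <= 1 -> integrable Y ->
  cvar_obj a Y eta <= \int[P]_w Y w.
Proof.
move=> /andP[a_gt0 a_le1] iY; rewrite /cvar_obj.
set m := \int[P]_w _.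
have m_ge0 : 0 <= m by apply: Rintegral_ge0 => // w _; rewrite le_max lexx orbT.
have m_ge : eta - \int[P]_w Y w <= m.
  rewrite -[X in X - _]probability_Rintegral_cst -RintegralB //;
    last exact: integrable_cst_EFin.
  apply: le_Rintegral => //; last by move=> w _; rewrite le_max lexx.
    exact/integrableB_EFin/iY/integrable_cst_EFin.
  exact: integrable_shortfall.
have : m <= a^-1 * m by rewrite ler_peMl // invr_ge1 // unitfE gt_eqF.
lra.
Qed.

Lemma CVaR_le_expectation a Y : 0 < a <= 1 -> integrable Y ->
  CVaR P a Y <= \int[P]_w Y w.
Proof.
move=> ha iY; apply: ge_sup; first by exists (cvar_obj a Y 0), 0.
by move=> _ [eta _ <-]; exact: cvar_obj_le_expectation.
Qed.

Lemma cvar_obj_le_CVaR a Y eta : 0 < a <= 1 -> integrable Y ->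
  cvar_obj a Y eta <= CVaR P a Y.
Proof.
move=> ha iY; apply: sup_upper_bound; last by exists eta.
split; first by exists (cvar_obj a Y 0), 0.
by exists (\int[P]_w Y w) => _ [e _ <-]; exact: cvar_obj_le_expectation.
Qed.

Lemma le_CVaR a Y Z : 0 < a <= 1 -> integrable Y -> integrable Z ->
  (forall w, Y w <= Z w) -> CVaR P a Y <= CVaR P a Z.
Proof.
move=> ha iY iZ YZ; have /andP[a_gt0 _] := ha.
apply: ge_sup; first by exists (cvar_obj a Y 0), 0.
move=> _ [eta _ <-]; apply: le_trans (cvar_obj_le_CVaR eta ha iZ).
rewrite /cvar_obj lerD2l lerN2; apply: ler_wpM2l; first by rewrite invr_ge0 ltW.
apply: le_Rintegral => //; try exact: integrable_shortfall.
by move=> w _; rewrite ge_max !le_max lexx orbT andbT lerD2l lerN2 YZ.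
Qed.

Lemma cvar_obj1E Y eta : integrable Y ->
  cvar_obj 1 Y eta = \int[P]_w Y w - \int[P]_w Num.max (Y w - eta) 0.
Proof.
move=> iY; rewrite /cvar_obj invr1 mul1r.
have iB : integrable (fun w => eta - Y w).
  exact/integrableB_EFin/iY/integrable_cst_EFin.
have -> : \int[P]_w Num.max (eta - Y w) 0 =
          \int[P]_w (eta - Y w + Num.max (Y w - eta) 0).
  by apply: eq_Rintegral => w _; rewrite !maxEge; case: ifP; case: ifP; lra.
rewrite RintegralD ?RintegralB ?probability_Rintegral_cst //;
  [lra | exact: integrable_cst_EFin | exact: integrable_excess].
Qed.

Lemma cvg_Rintegral_excess Y : integrable Y ->
  (fun N : nat => \int[P]_w Num.max (Y w - N%:R) 0) @ \oo --> 0.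
Proof.
move=> iY; pose g (N : nat) w := Num.max (Y w - N%:R) 0.
have g_cvg0 w : (fun N => (g N w)%:E) @ \oo --> (0 : \bar R).
  apply: cvg_near_cst; exists (Num.truncn `|Y w|).+1 => // N /= leN.
  rewrite /g; congr EFin; apply/max_idPr; rewrite subr_le0.
  apply: le_trans (ler_norm _) _; apply/ltW; apply: lt_le_trans (truncnS_gt _) _.
  by rewrite ler_nat.
have g_le N w : (`|(g N w)%:E| <= (`|Y w|)%:E)%E.
  rewrite /= lee_fin ger0_norm ?le_max ?lexx ?orbT // /g ge_max normr_ge0 andbT.
  by apply: le_trans (ler_norm _); rewrite lerBlDr lerDl.
have [_ _] := dominated_convergence measurableT
  (fun N => measurable_int P (integrable_excess N%:R iY))
  (measurable_cst _) (aeW _ (fun w _ => g_cvg0 w)) (integrable_norm iY)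
  (aeW _ (fun w N _ => g_le N w)).
rewrite integral0; exact: fine_cvg.
Qed.

Lemma CVaR1E Y : integrable Y -> CVaR P 1 Y = \int[P]_w Y w.
Proof.
move=> iY; apply/le_anti; rewrite CVaR_le_expectation ?ltr01 ?lexx //=.
have obj_cvg : (fun N : nat => cvar_obj 1 Y N%:R) @ \oo --> \int[P]_w Y w.
  rewrite (_ : (fun N : nat => _) = fun N : nat =>
      \int[P]_w Y w - \int[P]_w Num.max (Y w - N%:R) 0); last first.
    by apply/funext => N; exact: cvar_obj1E.
  have := cvgB (cvg_cst (\int[P]_w Y w)) (cvg_Rintegral_excess iY).
  by rewrite subr0; apply.
rewrite -(cvg_lim _ obj_cvg) //; apply: limr_le; first exact: cvgP obj_cvg.
by apply: nearW => N; apply: cvar_obj_le_CVaR; rewrite // ltr01 lexx.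
Qed.

End CVaR_expectation.
Section SubmodularSetFunction.
Context (I : finType) (R : realDomainType) (F : {set I} -> R).
Hypothesis F_submod : forall A B, F (A :|: B) + F (A :&: B) <= F A + F B.

Lemma submod_le_sum_marginal A J :
  F (A :|: J) <= F A + \sum_(j in J) (F (j |: A) - F A).
Proof.
have [m] := ubnP #|J|; elim: m J => // m IH J /ltnSE cardJ.
have [-> | [j jJ]] := set_0Vmem J; first by rewrite finset.setU0 big_set0 addr0.
set J' := J :\ j.
have IHJ' : F (A :|: J') <= F A + \sum_(i in J') (F (i |: A) - F A).
  by apply: IH; rewrite (cardsD1 j J) jJ in cardJ.
have eU : (A :|: J') :|: (j |: A) = A :|: J.
  apply/setP => y; rewrite !inE; case: (eqVneq y j) => [-> | _] /=.
    by rewrite jJ !orbT.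
  by case: (y \in A); rewrite ?orbF.
have eI : (A :|: J') :&: (j |: A) = A.
  apply/setP => y; rewrite !inE; case: (eqVneq y j) => [-> | _] /=.
    by case: (j \in A); rewrite /= ?eqxx.
  by case: (y \in A); case: (y \in J).
have := F_submod (A :|: J') (j |: A); rewrite eU eI (big_setD1 j jJ) /= -/J'.
lra.
Qed.

End SubmodularSetFunction.
Lemma sum_setC_mul_indicator (I : finType) (R : pzRingType) (A B : {set I})
    (F : I -> R) :
  \sum_(j in ~: A) F j * (j \in B)%:R = \sum_(j in B :\: A) F j.
Proof.
rewrite big_mkcond [RHS]big_mkcond; apply: eq_bigr => j _; rewrite !inE.
by case: (j \in B); case: (j \in A); rewrite /= ?mulr1 ?mulr0.
Qed.

Lemma index_ge_of_mem_drop (I : eqType) (s : seq I) k y :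
  uniq s -> y \in drop k s -> (k <= index y s)%N.
Proof.
move=> us /(nthP y) [i ltis <-]; rewrite nth_drop index_uniq ?leq_addr //.
by rewrite size_drop ltn_subRL in ltis.
Qed.

Section CutValidity.
Context d (T : measurableType d) (R : realType) (P : probability T R) (n : nat)
  (sigma : {set 'I_n} -> T -> R) (a : R).
Hypothesis sigma_mono : forall w (A B : {set 'I_n}),
  A \subset B -> sigma A w <= sigma B w.
Hypothesis sigma_submod : forall w (A B : {set 'I_n}),
  sigma (A :|: B) w + sigma (A :&: B) w <= sigma A w + sigma B w.
Hypothesis sigma_integrable : forall A, P.-integrable setT (EFin \o sigma A).
Hypothesis a_range : 0 < a <= 1.
Implicit Types (A B x xb : {set 'I_n}).

Let Esigma A := \int[P]_w sigma A w.

Lemma Esigma_mono A B : A \subset B -> Esigma A <= Esigma B.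
Proof. by move=> AB; apply: le_Rintegral => // w _; exact: sigma_mono. Qed.

Lemma Esigma_submod A B :
  Esigma (A :|: B) + Esigma (A :&: B) <= Esigma A + Esigma B.
Proof.
rewrite /Esigma -!RintegralD //.
by apply: le_Rintegral => //; exact: integrableD_EFin.
Qed.

Lemma CVaR_sigma_mono A B :
  A \subset B -> CVaR P a (sigma A) <= CVaR P a (sigma B).
Proof. by move=> AB; apply: le_CVaR => // w; exact: sigma_mono. Qed.

Lemma cutA_valid xb x : CVaR P a (sigma x) <= cutA P sigma a xb x.
Proof.
rewrite /cutA sum_setC_mul_indicator; set J := x :\: xb.
have x_sub : x \subset xb :|: J.
  by rewrite -{1}(setID x xb) finset.setSU // subsetIr.
have [J0 | [j jJ]] := set_0Vmem J.
  rewrite J0 big_set0 addr0; apply: CVaR_sigma_mono.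
  by rewrite J0 finset.setU0 in x_sub.
under eq_bigr => i _ do rewrite CVaR1E //.
set c := CVaR P a (sigma xb).
have c_le : c <= Esigma xb by exact: CVaR_le_expectation.
have submod := submod_le_sum_marginal Esigma_submod xb J.
have x_le : CVaR P a (sigma x) <= Esigma (xb :|: J).
  exact: le_trans (CVaR_le_expectation _ _) (Esigma_mono x_sub).
have [m cardJ] : exists m, #|J| = m.+1.
  by exists #|J|.-1; rewrite prednK // card_gt0; apply/set0Pn; exists j.
move: submod; rewrite !sumrB !sumr_const cardJ !mulrS.
have := ler_wMn2r m c_le; lra.
Qed.

Lemma cutA_self xb : cutA P sigma a xb xb = CVaR P a (sigma xb).
Proof.
by rewrite /cutA sum_setC_mul_indicator finset.setDv big_set0 addr0.
Qed.

Lemma cutB_valid xb s x : is_ordering_of_complement xb s ->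
  CVaR P a (sigma x) <= cutB P sigma a xb s x.
Proof.
rewrite /is_ordering_of_complement /cutB => perm_s.
set c := CVaR P a (sigma xb).
pose D j := ~: [set y in drop (index j s).+1 s].
have us : uniq s by rewrite (perm_uniq perm_s) enum_uniq.
have mem_s j : (j \in s) = (j \notin xb).
  by rewrite (perm_mem perm_s) mem_enum inE.
have coef_ge0 j : 0 <= CVaR P a (sigma (D j)) - c.
  rewrite subr_ge0; apply: CVaR_sigma_mono; apply/fintype.subsetP => y yxb.
  by rewrite !inE; apply: contraL yxb => /mem_drop; rewrite mem_s.
have [x_sub | [j0 j0x]] := set_0Vmem (x :\: xb).
  rewrite big1_seq ?addr0 => [|j /andP[_ js]]; last first.
    have := congr1 (fun A => j \in A) x_sub.
    by rewrite !inE -mem_s js /= => ->; rewrite mulr0.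
  by apply: CVaR_sigma_mono; rewrite -finset.setD_eq0 x_sub.
have [j jx jmax] := @arg_maxnP _ j0 (mem (x :\: xb)) (fun k => index k s) j0x.
have /andP[js jx'] : (j \in s) && (j \in x) by rewrite mem_s -finset.in_setD.
have x_sub : x \subset D j.
  apply/fintype.subsetP => y yx; rewrite !inE; apply/negP => yd.
  have yA : y \in x :\: xb by rewrite inE -mem_s (mem_drop yd) yx.
  by have := leq_trans (index_ge_of_mem_drop us yd) (jmax y yA); rewrite ltnn.
pose F i := (CVaR P a (sigma (D i)) - c) * (i \in x)%:R.
change (CVaR P a (sigma x) <= c + \sum_(i <- s) F i).
have sum_split : \sum_(i <- s) F i = F j + \sum_(i <- s | i != j) F i.
  exact: bigD1_seq.
have rest_ge0 : 0 <= \sum_(i <- s | i != j) F i.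
  by apply: sumr_ge0 => i _; apply: mulr_ge0.
have := CVaR_sigma_mono x_sub.
rewrite sum_split {1}/F jx' mulr1; lra.
Qed.

Lemma cutB_self xb s : is_ordering_of_complement xb s ->
  cutB P sigma a xb s xb = CVaR P a (sigma xb).
Proof.
move=> perm_s; rewrite /cutB big1_seq ?addr0 // => j /= js.
by move: js; rewrite (perm_mem perm_s) mem_enum inE => /negbTE ->; rewrite mulr0.
Qed.

Lemma new_cuts_valid xb N c x : new_cuts P sigma a xb N -> N c ->
  CVaR P a (sigma x) <= c x.
Proof.
case=> [-> -> | [s [perm_s [-> -> | -> [-> | ->]]]]].
- exact: cutA_valid.
- exact: cutB_valid.
- exact: cutA_valid.
- exact: cutB_valid.
Qed.

Lemma new_cuts_tight xb N : new_cuts P sigma a xb N ->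
  exists2 c, N c & c xb = CVaR P a (sigma xb).
Proof.
case=> [-> | [s [perm_s [-> | ->]]]].
- by exists (cutA P sigma a xb) => //; exact: cutA_self.
- by exists (cutB P sigma a xb s) => //; exact: cutB_self.
- by exists (cutA P sigma a xb); [left | exact: cutA_self].
Qed.

Section Run.
Variables (X : set {set 'I_n}) (C : nat -> set (dcg_cut n R)).
Variables (xs : nat -> {set 'I_n}) (ps : nat -> R).
Hypothesis run : dcg_run P sigma a X C xs ps.

Local Notation gap i := (ps i - CVaR P a (sigma (xs i))).

Lemma dcg_run_cuts_mono i k : (forall j, (j < k)%N -> 0 < gap j) ->
  (i <= k)%N -> C i `<=` C k.
Proof.
elim: k => [_ | k IH gap_gt0]; first by rewrite leqn0 => /eqP ->.
rewrite leq_eqVlt => /predU1P [-> // | lt_ik].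
have [_ [N [_ ->]]] := run (fun j jk => gap_gt0 j (ltnW jk)).
have sub_k : C i `<=` C k.
  by apply: IH lt_ik => j jk; apply: gap_gt0; rewrite ltnS ltnW.
by move=> c /sub_k Ckc; left.
Qed.

Lemma dcg_run_xs_neq i k : (forall j, (j <= k)%N -> 0 < gap j) ->
  (i < k)%N -> xs i != xs k.
Proof.
move=> gap_gt0 lt_ik; apply/eqP => xs_ik.
have gap_lt j : (j < k)%N -> 0 < gap j by move=> jk; exact/gap_gt0/ltnW.
have [_ [N [newN C_i1]]] := run (fun j ji => gap_lt j (ltn_trans ji lt_ik)).
have [c Nc c_tight] := new_cuts_tight newN.
have Ckc : C k c by apply: (dcg_run_cuts_mono gap_lt lt_ik); rewrite C_i1; right.
have [[_ [ps_le _]] _] := run gap_lt.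
have := ps_le c Ckc; have := gap_gt0 k (leqnn k).
by rewrite -xs_ik c_tight; lra.
Qed.

Lemma dcg_run_terminates : exists k, gap k <= 0.
Proof.
apply: contrapT => /forallNP gap_gt0.
have {}gap_gt0 j : 0 < gap j by rewrite ltNge; apply/negP/gap_gt0.
pose f (i : 'I_#|{set 'I_n}|.+1) := xs i.
suff /leq_card : injective f by rewrite card_ord ltnn.
have xs_neq i j : (i < j)%N -> xs i != xs j by apply: dcg_run_xs_neq => l _.
move=> i j xs_ij; apply: val_inj; rewrite /f in xs_ij.
apply/eqP; apply: contraT; rewrite neq_ltn => /orP[] /xs_neq.
all: by rewrite xs_ij eqxx.
Qed.

Hypothesis C0_valid : forall c x, C 0 c -> X x -> CVaR P a (sigma x) <= c x.

Lemma dcg_run_cuts_valid k : (forall j, (j < k)%N -> 0 < gap j) ->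
  forall c x, C k c -> X x -> CVaR P a (sigma x) <= c x.
Proof.
elim: k => [_ | k IH gap_gt0]; first exact: C0_valid.
have [_ [N [newN ->]]] := run (fun j jk => gap_gt0 j (ltnW jk)).
move=> c x [Ckc | Nc] Xx; last exact: new_cuts_valid newN Nc.
by apply: IH => // j jk; apply: gap_gt0; rewrite ltnW.
Qed.

Lemma dcg_run_optimal k : (forall j, (j < k)%N -> 0 < gap j) -> gap k <= 0 ->
  X (xs k) /\ forall x, X x -> CVaR P a (sigma x) <= CVaR P a (sigma (xs k)).
Proof.
move=> gap_gt0 gap_le0; have [[Xk [_ ps_max]] _] := run gap_gt0.
split=> // x Xx.
have := ps_max x _ Xx (fun c Cc => dcg_run_cuts_valid gap_gt0 Cc Xx).
by move: gap_le0; lra.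
Qed.

End Run.

End CutValidity.

Theorem proposition3 (n : nat) (d : measure_display) (T : measurableType d)
  (R : realType) (P : probability T R) (sigma : {set 'I_n} -> T -> R)
  (X : set {set 'I_n}) (alpha : R)
  (C : nat -> set (dcg_cut n R)) (xs : nat -> {set 'I_n}) (ps : nat -> R) :
  (forall w (A B : {set 'I_n}), A \subset B -> sigma A w <= sigma B w) ->
  (forall w (A B : {set 'I_n}), sigma (A :|: B) w + sigma (A :&: B) w <= sigma A w + sigma B w) ->
  (forall x, P.-integrable setT (EFin \o sigma x)) ->
  X !=set0 ->
  0 < alpha <= 1 ->
  finite_set (C 0%N) ->
  (forall c, C 0%N c -> affine_cut c /\ (forall x, X x -> CVaR P alpha (sigma x) <= c x)) ->
  dcg_run P sigma alpha X C xs ps ->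
  exists k : nat,
    ps k - CVaR P alpha (sigma (xs k)) <= 0 /\
    (forall i, (i < k)%N -> ps i - CVaR P alpha (sigma (xs i)) > 0) /\
    X (xs k) /\
    (forall x, X x -> CVaR P alpha (sigma x) <= CVaR P alpha (sigma (xs k))).
Proof.
move=> sigma_mono sigma_submod sigma_integrable _ alpha_range _ C0_valid run.
have [k gap_le0 gap_min] := ex_minnP (dcg_run_terminates run).
have gap_gt0 i : (i < k)%N -> 0 < ps i - CVaR P alpha (sigma (xs i)).
  move=> lt_ik; rewrite ltNge; apply: contraTN lt_ik => /gap_min.
  by rewrite -leqNgt.
exists k; split=> //; split=> //.
apply: (dcg_run_optimal sigma_mono sigma_submod sigma_integrable alpha_range run)
  => //.
by move=> c x /C0_valid[_]; apply.
Qed.
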